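(* Let $S=(N,M_0)$ be any Petri net system and $S^\Theta=(N^\Theta,M_0^\Theta)$ the system obtained from $S$ by the transformation $\Theta$. Then: (1) If $S$ is a 1S system then $S^\Theta$ is a 1S system; if $S$ is homogeneous then $S^\Theta$ is homogeneous; if $S$ is an H1S-WMG$_\le$ then $S^\Theta$ is an H1S-WMG$_\le$; if $S$ is a strongly connected H1S-WMG$_\le$ whose shared place deletion (if any) yields a strongly connected WMG$_\le$, then $S^\Theta$ also has these properties. (2) For each sequence $\alpha$ feasible in $S$, the expanded sequence $\theta(\alpha)$ is feasible in $S^\Theta$. (3) For each sequence $\beta'$ feasible in $S^\Theta$, the reduced sequence $\beta=\hat\theta(\beta')$ is also feasible in $S^\Theta$, and there is a sequence $\alpha$ feasible in $S$ such that $\theta(\alpha)$ is feasible in $S^\Theta$ and $\mathbf{P}(\theta(\alpha))=\mathbf{P}(\beta)$. (4) If each place of $S$ has a (finite) structural bound, then each place of $S^\Theta$ has a (finite) structural bound. (5) $S^\Theta$ is deadlockable iff $S$ is deadlockable. (6) $S^\Theta$ is live iff $S$ is live.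
   Context: A Petri net is $N=(P,T,W)$ with finite disjoint sets $P$, $T$ and weights $W:(P\times T)\cup(T\times P)\to\mathbb{N}$; incidence matrix $I(p,t)=W(t,p)-W(p,t)$; ${}^\bullet n=\{n':W(n',n)>0\}$, $n^\bullet=\{n':W(n,n')>0\}$. Transition $t$ is enabled at $M$ if $M(p)\ge W(p,t)$ for all $p$; firing yields $M+I[\cdot,t]$; $\mathbf{P}(\sigma)$ is the Parikh vector. A system is live if for every transition $t$ and every reachable marking $M'$ some marking reachable from $M'$ enables $t$; it is deadlockable if some reachable marking enables no transition. A place is shared if it has at least two outputs; 1S means at most one shared place; homogeneous means for each place all its output weights are equal; H1S-WMG$_\le$: homogeneous, at most one shared place, and deleting the shared place (if any) with its arcs, keeping all transitions, yields a net whose places each have at most one input and at most one output. Strongly connected refers to the bipartite graph on $P\cup T$ with arcs $(x,y)$ for $W(x,y)>0$. The structural bound of place $p$ is $SB(p,S)=\max\{M(p): M\in\mathbb{N}^P, \exists Y\in\mathbb{N}^T, M=M_0+I\cdot Y\}$ when finite. Transformation $\Theta$: start from $(N,M_0)$; for each pair $(p,t)$ of the original net $N$ with $p^\bullet=\{t\}$ and $|{}^\bullet t|\ge 2$, add two places $p_a^{(p,t)}$ (initial marking $0$) and $p_b^{(p,t)}$ (initial marking $1$), a transition $t_p^{(p,t)}$, arcs with $W(p,t_p^{(p,t)})=W(p,t)$ and $W(t_p^{(p,t)},p_a^{(p,t)})=W(p_a^{(p,t)},t)=W(t,p_b^{(p,t)})=W(p_b^{(p,t)},t_p^{(p,t)})=1$,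 and remove the arc $(p,t)$. Let $NewTrans$ be the set of added transitions. For a transition $t$ of $N$, let $NewTransPre(t)=NewTrans\cap{}^\bullet({}^\bullet t)$ (computed in $N^\Theta$), and $Seq(A)$ the sequence firing each transition of $A$ once in a fixed order ($\epsilon$ if $A=\emptyset$). Expanded sequence: $\theta(\epsilon)=\epsilon$ and $\theta(t\alpha')=Seq(NewTransPre(t))\,t\,\theta(\alpha')$. Reduced sequence: for a sequence $\beta'$ of $S^\Theta$, $\hat\theta(\beta')$ is obtained by removing each occurrence of a new transition $t_p^{(p,t)}$ after which no occurrence of $t$ (the unique transition with $\{t\}=(t_p^{(p,t)\bullet})^\bullet$) appears in $\beta'$. *)

From mathcomp Require Import all_boot all_order all_algebra.
Set Implicit Arguments. Unset Strict Implicit. Unset Printing Implicit Defensive.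
Import GRing.Theory Num.Theory.

(* A Petri net N = (P, T, W): W(p,t) = pre p t, W(t,p) = post t p. *)
Record pnet (P T : finType) := PNet { pre : P -> T -> nat ; post : T -> P -> nat }.
Arguments PNet {P T}.
Arguments pre {P T}.
Arguments post {P T}.

Section Basic.
Context {P T : finType} (N : pnet P T).

Definition tpost (p : P) : {set T} := [set t | 0 < pre N p t].
Definition tpre (p : P) : {set T} := [set t | 0 < post N t p].
Definition ppre (t : T) : {set P} := [set p | 0 < pre N p t].
Definition ppost (t : T) : {set P} := [set p | 0 < post N t p].

Definition inc (p : P) (t : T) : int := (post N t p)%:Z - (pre N p t)%:Z.

Definition enabled (M : P -> nat) (t : T) : bool := [forall p, pre N p t <= M p].
Definition fire (M : P -> nat) (t : T) : P -> nat := fun p => M p - pre N p t + post N t p.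
Fixpoint feasible (M : P -> nat) (s : seq T) : bool :=
  if s is t :: s' then enabled M t && feasible (fire M t) s' else true.
Fixpoint after (M : P -> nat) (s : seq T) : P -> nat :=
  if s is t :: s' then after (fire M t) s' else M.

Definition live (M0 : P -> nat) : Prop :=
  forall t s, feasible M0 s ->
    exists s', feasible (after M0 s) s' && enabled (after (after M0 s) s') t.

Definition deadlockable (M0 : P -> nat) : Prop :=
  exists s, feasible M0 s && [forall t, ~~ enabled (after M0 s) t].

Definition sbounded (M0 : P -> nat) (p : P) : Prop :=
  exists b : nat, forall Y : T -> nat,
    (forall q, (0 <= (M0 q)%:Z + \sum_(t : T) inc q t * (Y t)%:Z)%R) ->
    ((M0 p)%:Z + \sum_(t : T) inc p t * (Y t)%:Z <= b%:Z)%R.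

Definition shared (p : P) : bool := 1 < #|tpost p|.
Definition is1S : bool := #|[set p | shared p]| <= 1.
Definition homogeneous : Prop :=
  forall p t t', 0 < pre N p t -> 0 < pre N p t' -> pre N p t = pre N p t'.
(* deleting the shared place (if any) leaves places with <= 1 input and <= 1 output *)
Definition h1s_wmg : Prop :=
  [/\ homogeneous, is1S & forall p, ~~ shared p -> (#|tpre p| <= 1) && (#|tpost p| <= 1)].

Definition edge : rel (P + T) := fun x y =>
  match x, y with
  | inl p, inr t => 0 < pre N p t
  | inr t, inl p => 0 < post N t p
  | _, _ => false
  end.
Definition strongly_connected : Prop := forall x y, connect edge x y.
(* the net obtained by deleting the shared place (if any), keeping all transitions *)
Definition keep (x : P + T) : bool :=
  match x with inl p => ~~ shared p | inr _ => true end.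
Definition edge_del : rel (P + T) := fun x y => [&& keep x, keep y & edge x y].
Definition del_strongly_connected : Prop :=
  forall x y, keep x -> keep y -> connect edge_del x y.

Definition parikh (s : seq T) (t : T) : nat := count_mem t s.

Definition thetaPair (pt : P * T) : bool :=
  (tpost pt.1 == [set pt.2]) && (1 < #|ppre pt.2|).
Definition TP : finType := {pt : P * T | thetaPair pt}.

(* places of N^Theta: original places, and for each pair x:
   inr (x, false) = p_a^x (initially 0), inr (x, true) = p_b^x (initially 1).
   transitions of N^Theta: original transitions, and inr x = t_p^x. *)
Definition PTh : finType := (P + TP * bool)%type.
Definition TTh : finType := (T + TP)%type.

Definition thetaPre (q : PTh) (u : TTh) : nat :=
  match q, u with
  | inl p, inl t => if thetaPair (p, t) then 0 else pre N p t
  | inl p, inr x => if (val x).1 == p then pre N p (val x).2 else 0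
  | inr (x, false), inl t => if (val x).2 == t then 1 else 0
  | inr (x, true), inr y => if x == y then 1 else 0
  | _, _ => 0
  end.

Definition thetaPost (u : TTh) (q : PTh) : nat :=
  match u, q with
  | inl t, inl p => post N t p
  | inr x, inr (y, false) => if x == y then 1 else 0
  | inl t, inr (y, true) => if (val y).2 == t then 1 else 0
  | _, _ => 0
  end.

Definition thetaNet : pnet PTh TTh := PNet thetaPre thetaPost.

Definition thetaM0 (M0 : P -> nat) : PTh -> nat := fun q =>
  match q with inl p => M0 p | inr (_, b) => nat_of_bool b end.

Definition newTransPre (t : T) : {set TP} :=
  [set x | [exists q : PTh, (0 < thetaPost (inr x) q) && (0 < thetaPre q (inl t))]].

(* expanded sequence; ordr A is the fixed firing order Seq(A) of the set A *)
Fixpoint expand (ordr : {set TP} -> seq TP) (s : seq T) : seq TTh :=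
  if s is t :: s' then [seq inr x | x <- ordr (newTransPre t)] ++ inl t :: expand ordr s'
  else [::].

(* the unique original transition t with {t} = (t_p^bullet)^bullet *)
Definition targetT (x : TP) : T := (val x).2.

Fixpoint reduce (s : seq TTh) : seq TTh :=
  if s is u :: s' then
    match u with
    | inr x => if (inl (targetT x) : TTh) \in s' then u :: reduce s' else reduce s'
    | inl _ => u :: reduce s'
    end
  else [::].

End Basic.

Arguments thetaM0 {P T} N M0 _.
Arguments expand {P T} N ordr s.
Arguments reduce {P T} N s.
Arguments newTransPre {P T} N t.
Arguments targetT {P T} N x.

From mathcomp Require Import all_boot all_order all_algebra.
From mathcomp Require Import zify.
Set Implicit Arguments. Unset Strict Implicit. Unset Printing Implicit Defensive.
Import GRing.Theory.

(* Θ replaces every arc (p, t) with p• = {t} and |•t| >= 2 by a handshake p -> t_p -> p_a -> t,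
   where the place p_b lets t_p fire at most once between two firings of t.  A marking of N^Θ
   represents the marking of N in which the W(p,t) tokens moved by t_p into p_a are counted back
   into p.  Under this correspondence firing t_p changes nothing in N and firing t in N^Θ fires t
   in N; conversely a step t of N is replayed in N^Θ by first firing those t_p that are not yet
   pending and then t.  Feasibility, Parikh vectors, deadlocks and liveness transfer along these
   two simulations.  Structural bounds transfer because the state equation of N^Θ differs from
   that of N only by the terms W(p,t) (Y(t) - Y(t_p)) and by the state equations of p_a and p_b,
   which force 0 <= Y(t_p) - Y(t) <= 1.  The structural classes are preserved since each new
   place has exactly one input and one output, and the new nodes of a pair lie on the cycle
   t -> p_b -> t_p -> p_a -> t. *)

Section Firing.
Variables (P T : finType) (N : pnet P T).

Lemma mem_tpost p t : (t \in tpost N p) = (0 < pre N p t).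
Proof. by rewrite inE. Qed.

Lemma enabled_pre_le M t q : enabled N M t -> pre N q t <= M q.
Proof. by move/forallP. Qed.

Lemma fireE M t q : fire N M t q = M q - pre N q t + post N t q.
Proof. by []. Qed.

Definition dead (M : P -> nat) : bool := [forall t, ~~ enabled N M t].

Definition state_change (Y : T -> nat) (p : P) : int := (\sum_(t : T) inc N p t * (Y t)%:Z)%R.

Lemma feasible_cat M s1 s2 :
  feasible N M (s1 ++ s2) = feasible N M s1 && feasible N (after N M s1) s2.
Proof. by elim: s1 M => //= t s1 IH M; rewrite IH andbA. Qed.

Lemma after_cat M s1 s2 : after N M (s1 ++ s2) = after N (after N M s1) s2.
Proof. by elim: s1 M => //= t s1 IH M. Qed.

Lemma after1 M t : after N M [:: t] = fire N M t.
Proof. by []. Qed.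

Lemma feasible1 M t : feasible N M [:: t] = enabled N M t.
Proof. by rewrite /= andbT. Qed.

Lemma feasible_le q0 M1 M2 s :
  (forall t, t \in s -> pre N q0 t = 0) -> (forall q, q != q0 -> M1 q <= M2 q) ->
  feasible N M1 s -> feasible N M2 s.
Proof.
elim: s M1 M2 => [|t s IH] M1 M2 //= s_q0 le_M /andP[/forallP en1 fs].
have en2 : enabled N M2 t.
  apply/forallP => q; have [->|q_q0] := eqVneq q q0; first by rewrite s_q0 ?mem_head.
  exact: leq_trans (en1 q) (le_M q q_q0).
rewrite en2 (IH (fire N M1 t)) // => [u us|q q_q0].
  by rewrite s_q0 // in_cons us orbT.
by rewrite /fire leq_add2r leq_sub2r ?le_M.
Qed.

End Firing.

Lemma sum_eq_if (I : finType) (i0 : I) (F : I -> int) :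
  (\sum_(i : I) (if i == i0 then F i else 0) = F i0)%R.
Proof. by rewrite -big_mkcond big_pred1_eq. Qed.

Section SumEq.
Variables A B : eqType.
Implicit Types (a : A) (b : B).

Lemma eq_inl a a' : (inl a == inl a' :> A + B) = (a == a'). Proof. by []. Qed.
Lemma eq_inr b b' : (inr b == inr b' :> A + B) = (b == b'). Proof. by []. Qed.
Lemma eq_inl_inr a b : (inl a == inr b :> A + B) = false. Proof. by []. Qed.
Lemma eq_inr_inl a b : (inr b == inl a :> A + B) = false. Proof. by []. Qed.

End SumEq.

Definition eq_sumE := (eq_inl, eq_inr, eq_inl_inr, eq_inr_inl).

Lemma count_mem_cons (X : eqType) (u v : X) s : count_mem u (v :: s) = (v == u) + count_mem u s.
Proof. by []. Qed.

Definition restrict_rel (X : Type) (k : pred X) (e : rel X) : rel X :=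
  fun x y => [&& k x, k y & e x y].

Lemma connect_homo (A B : finType) (e : rel A) (e' : rel B) (f : A -> B) :
  (forall a b, e a b -> connect e' (f a) (f b)) ->
  forall a b, connect e a b -> connect e' (f a) (f b).
Proof.
move=> e_f a b /connectP[p + ->]; elim: p a => [|c p IH] a /=; first by rewrite connect0.
by case/andP=> /e_f e_ac /IH; apply: connect_trans.
Qed.

Lemma mem_imset_inl (A B : finType) (D : {set A}) a :
  (inl a \in (inl @: D : {set A + B})) = (a \in D).
Proof. exact: mem_imset inl_inj. Qed.

Lemma inr_notin_imset_inl (A B : finType) (D : {set A}) b :
  (inr b \in (inl @: D : {set A + B})) = false.
Proof. by apply/imsetP => -[]. Qed.

Section Theta.
Variables (P T : finType) (N : pnet P T).

Local Notation NT := (thetaNet N).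
Local Notation src x := (val x).1.
Local Notation tgt x := (val x).2.
Local Notation pa x := (inr (x, false) : PTh N).
Local Notation pb x := (inr (x, true) : PTh N).

Lemma tpost_src (x : TP N) : tpost N (src x) = [set tgt x].
Proof. by case/andP: (valP x) => /eqP. Qed.

Lemma pre_src_gt0 (x : TP N) : 0 < pre N (src x) (tgt x).
Proof. by have := set11 (tgt x); rewrite -tpost_src inE. Qed.

Lemma pre_src_eq0 (x : TP N) t : t != tgt x -> pre N (src x) t = 0.
Proof.
move=> t_x; apply/eqP; rewrite eqn0Ngt; apply: contra t_x => pre_t.
by rewrite -in_set1 -tpost_src inE.
Qed.

Lemma src_inj : injective (fun x : TP N => src x).
Proof.
move=> x y xy; apply: val_inj.
have /set1P tgt_xy : tgt x \in [set tgt y] by rewrite -tpost_src -xy tpost_src set11.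
by move: (val x) (val y) xy tgt_xy => [? ?] [? ?] /= -> ->.
Qed.

Lemma thetaPair_src (x : TP N) t : thetaPair N (src x, t) = (t == tgt x).
Proof.
apply/idP/eqP => [/andP[/eqP /= tpost_x _]|->]; last by rewrite -surjective_pairing (valP x).
by apply/set1P; rewrite -tpost_src tpost_x set11.
Qed.

Variant place_spec (p : P) : Prop :=
  | PairedPlace (x : TP N) of src x = p
  | UnpairedPlace of forall x : TP N, src x != p.

Lemma placeP p : place_spec p.
Proof.
case: (pickP (fun x : TP N => src x == p)) => [x /eqP|none]; first exact: PairedPlace.
by apply: UnpairedPlace => x; rewrite none.
Qed.

Lemma thetaPair_unpaired p t : (forall x : TP N, src x != p) -> thetaPair N (p, t) = false.
Proof. by move=> unp; apply/negP => pt; have := unp (exist _ (p, t) pt); rewrite eqxx. Qed.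

Lemma pre_inl_inl p t : pre NT (inl p) (inl t) = if thetaPair N (p, t) then 0 else pre N p t.
Proof. by []. Qed.
Lemma pre_inl_inr p (x : TP N) : pre NT (inl p) (inr x) = if src x == p then pre N p (tgt x) else 0.
Proof. by []. Qed.
Lemma pre_pa_inl y t : pre NT (pa y) (inl t) = (tgt y == t).
Proof. by []. Qed.
Lemma pre_pa_inr y x : pre NT (pa y) (inr x) = 0.
Proof. by []. Qed.
Lemma pre_pb_inl y t : pre NT (pb y) (inl t) = 0.
Proof. by []. Qed.
Lemma pre_pb_inr y x : pre NT (pb y) (inr x) = (y == x).
Proof. by []. Qed.
Lemma post_inl_inl t p : post NT (inl t) (inl p) = post N t p.
Proof. by []. Qed.
Lemma post_inr_inl x p : post NT (inr x) (inl p) = 0.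
Proof. by []. Qed.
Lemma post_inl_pa t y : post NT (inl t) (pa y) = 0.
Proof. by []. Qed.
Lemma post_inr_pa x y : post NT (inr x) (pa y) = (x == y).
Proof. by []. Qed.
Lemma post_inl_pb t y : post NT (inl t) (pb y) = (tgt y == t).
Proof. by []. Qed.
Lemma post_inr_pb x y : post NT (inr x) (pb y) = 0.
Proof. by []. Qed.

Definition thetaPreE := (pre_inl_inl, pre_inl_inr, pre_pa_inl, pre_pa_inr, pre_pb_inl, pre_pb_inr).
Definition thetaPostE :=
  (post_inl_inl, post_inr_inl, post_inl_pa, post_inr_pa, post_inl_pb, post_inr_pb).

(** * Structural classes *)

Lemma tpost_theta_src (x : TP N) : tpost NT (inl (src x)) = [set inr x].
Proof.
apply/setP => -[t|y]; rewrite !inE thetaPreE.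
  by rewrite thetaPair_src; case: eqVneq => // /pre_src_eq0 ->.
have [<-|yx] := eqVneq y x; first by rewrite !eqxx pre_src_gt0.
by rewrite (inj_eq src_inj) eq_inr (negbTE yx).
Qed.

Lemma tpost_theta_unpaired p :
  (forall x : TP N, src x != p) -> tpost NT (inl p) = inl @: tpost N p.
Proof.
move=> unp; apply/setP => -[t|y]; rewrite inE thetaPreE.
  by rewrite thetaPair_unpaired // mem_imset_inl inE.
by rewrite (negbTE (unp y)) inr_notin_imset_inl.
Qed.

Lemma tpre_theta_inl p : tpre NT (inl p) = inl @: tpre N p.
Proof.
by apply/setP => -[t|y]; rewrite inE thetaPostE ?mem_imset_inl ?inr_notin_imset_inl ?inE.
Qed.

Lemma tpost_theta_inr (x : TP N) (b : bool) :
  tpost NT (inr (x, b)) = [set if b then inr x else inl (tgt x)].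
Proof. by apply/setP; case: b => -[t|y]; rewrite !inE thetaPreE // lt0b // eq_sym. Qed.

Lemma tpre_theta_inr (x : TP N) (b : bool) :
  tpre NT (inr (x, b)) = [set if b then inl (tgt x) else inr x].
Proof. by apply/setP; case: b => -[t|y]; rewrite !inE thetaPostE // lt0b // eq_sym. Qed.

Lemma card_tpost_theta p : #|tpost NT (inl p)| = #|tpost N p|.
Proof.
case: (placeP p) => [x <-|unp]; first by rewrite tpost_theta_src tpost_src !cards1.
by rewrite tpost_theta_unpaired ?card_imset //; apply: inl_inj.
Qed.

Lemma card_tpre_theta p : #|tpre NT (inl p)| = #|tpre N p|.
Proof. by rewrite tpre_theta_inl card_imset //; apply: inl_inj. Qed.

Lemma shared_theta_inl p : shared NT (inl p) = shared N p.
Proof. by rewrite /shared card_tpost_theta. Qed.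

Lemma shared_theta_inr y : shared NT (inr y) = false.
Proof. by case: y => x b; rewrite /shared tpost_theta_inr cards1. Qed.

Lemma is1S_theta : is1S N -> is1S NT.
Proof.
rewrite /is1S; have -> : [set q | shared NT q] = inl @: [set p | shared N p].
  by apply/setP => -[p|y];
    rewrite inE ?shared_theta_inr ?shared_theta_inl ?mem_imset_inl ?inr_notin_imset_inl ?inE.
by rewrite card_imset //; apply: inl_inj.
Qed.

Lemma homogeneous_theta : homogeneous N -> homogeneous NT.
Proof.
move=> homN q u u'; rewrite -!mem_tpost => qu qu'.
have [|/card_le1_eqP single] := ltnP 1 #|tpost NT q|; last by rewrite (single _ _ qu qu').
case: q qu qu' => [p|[x b]]; last by rewrite tpost_theta_inr cards1.
case: (placeP p) => [x <-|unp]; first by rewrite tpost_theta_src cards1.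
rewrite tpost_theta_unpaired // => /imsetP[t tp ->] /imsetP[t' t'p ->] _.
by rewrite !thetaPreE !thetaPair_unpaired //; apply: homN; rewrite -mem_tpost.
Qed.

Lemma h1s_wmg_theta : h1s_wmg N -> h1s_wmg NT.
Proof.
case=> homN oneS unshared; split; [exact: homogeneous_theta | exact: is1S_theta |].
case=> [p|[x b]]; last by rewrite tpre_theta_inr tpost_theta_inr !cards1.
by rewrite shared_theta_inl card_tpre_theta card_tpost_theta; apply: unshared.
Qed.

Definition lift_node (z : P + T) : PTh N + TTh N :=
  match z with inl p => inl (inl p) | inr t => inr (inl t) end.

Definition theta_loop (x : TP N) : seq (PTh N + TTh N) :=
  [:: inr (inl (tgt x)); inl (pb x); inr (inr x); inl (pa x)].

(* [k] selects the nodes that are kept: all of them, or all but the shared place. *)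
Section Connectivity.
Variable k : pred (PTh N + TTh N).
Hypothesis k_new_place : forall y, k (inl (inr y)).
Hypothesis k_trans : forall u, k (inr u).
Local Notation e := (restrict_rel k (edge NT)).

Lemma cycle_theta_loop (x : TP N) : cycle e (theta_loop x).
Proof. by rewrite /= /restrict_rel !k_trans !k_new_place /edge !thetaPreE !thetaPostE !eqxx. Qed.

Lemma connect_theta_loop (x : TP N) : {in theta_loop x &, forall z z', connect e z z'}.
Proof. exact/connect_cycle/cycle_theta_loop. Qed.

Lemma connect_lift_node z : k z ->
  exists2 a, k (lift_node a) & connect e z (lift_node a) && connect e (lift_node a) z.
Proof.
case: z => [[p|[x b]]|[t|x]] kz; [exists (inl p) | exists (inr (tgt x)) | exists (inr t) |
  exists (inr (tgt x))]; rewrite ?connect0 ?k_trans //=.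
all: apply/andP; split; apply: (@connect_theta_loop x); rewrite ?(inE, eqxx, orbT) //.
all: by case: b {kz}; rewrite eqxx ?orbT.
Qed.

Lemma connect_lift_edge a b : k (lift_node a) -> k (lift_node b) -> edge N a b ->
  connect e (lift_node a) (lift_node b).
Proof.
case: a b => [p|t] [p'|t'] //= ka kb ab; last first.
  by apply: connect1; rewrite /restrict_rel ka kb /edge thetaPostE.
case pt': (thetaPair N (p, t')); last first.
  by apply: connect1; rewrite /restrict_rel ka kb /edge thetaPreE pt'.
pose x : TP N := exist _ (p, t') pt'.
apply: (@connect_trans _ _ (inr (inr x))).
  by apply: connect1; rewrite /restrict_rel ka k_trans /edge thetaPreE /= eqxx.
by apply: (@connect_theta_loop x); rewrite !inE eqxx ?orbT.
Qed.

Lemma connect_theta :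
  (forall a b, k (lift_node a) -> k (lift_node b) ->
     connect (restrict_rel (fun a => k (lift_node a)) (edge N)) a b) ->
  forall z z', k z -> k z' -> connect e z z'.
Proof.
move=> connN z z' /connect_lift_node[a ka /andP[za _]] /connect_lift_node[b kb /andP[_ bz']].
apply: connect_trans za (connect_trans _ bz').
apply: connect_homo (connN a b ka kb) => u v /and3P[]; exact: connect_lift_edge.
Qed.

End Connectivity.

Lemma keep_lift_node a : keep NT (lift_node a) = keep N a.
Proof. by case: a => [p|t] //=; rewrite shared_theta_inl. Qed.

Lemma strongly_connected_theta : strongly_connected N -> strongly_connected NT.
Proof.
move=> scN z z'; have eq_e : restrict_rel predT (edge NT) =2 edge NT by [].
by rewrite -(eq_connect eq_e); apply: connect_theta.
Qed.

Lemma del_strongly_connected_theta : del_strongly_connected N -> del_strongly_connected NT.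
Proof.
move=> scN; apply: connect_theta => [y|u|a b]; rewrite ?keep_lift_node //=.
  by rewrite shared_theta_inr.
have eq_e : restrict_rel (fun a => keep NT (lift_node a)) (edge N) =2 edge_del N.
  by move=> u v; rewrite /restrict_rel !keep_lift_node.
by rewrite (eq_connect eq_e); apply: scN.
Qed.

(** * The simulation *)

(* The places p_a, p_b of a pair form a flag telling whether t_p has fired since the last
   firing of t; if so, the W(p,t) tokens taken from p are counted as still lying in p. *)
Definition theta_rel (MN : P -> nat) (M' : PTh N -> nat) : Prop :=
  [/\ forall x, M' (pa x) + M' (pb x) = 1,
      forall p, (forall x : TP N, src x != p) -> MN p = M' (inl p) &
      forall x : TP N, MN (src x) = M' (inl (src x)) + M' (pa x) * pre N (src x) (tgt x)].

Definition settled (M' : PTh N -> nat) : Prop := forall x, M' (pa x) = 0.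

Lemma theta_rel_init M0 : theta_rel M0 (thetaM0 N M0).
Proof. by split=> // x /=; rewrite addn0. Qed.

Lemma settled_init M0 : settled (thetaM0 N M0).
Proof. by []. Qed.

Section Step.
Variables (MN : P -> nat) (M' : PTh N -> nat).
Hypothesis relM : theta_rel MN M'.

Lemma pa_pb (x : TP N) : M' (pa x) + M' (pb x) = 1.
Proof. by case: relM. Qed.

Lemma pa_eq1 (x : TP N) : (M' (pa x) == 1) = (M' (pb x) != 1).
Proof. by have := pa_pb x; lia. Qed.

Lemma pb_eq0 (x : TP N) : M' (pa x) = 1 -> M' (pb x) = 0.
Proof. by have := pa_pb x; lia. Qed.

Lemma pa_eq0 (x : TP N) : M' (pb x) = 1 -> M' (pa x) = 0.
Proof. by have := pa_pb x; lia. Qed.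

Lemma settled_pb (x : TP N) : settled M' -> M' (pb x) = 1.
Proof. by move=> setM; rewrite -(pa_pb x) setM. Qed.

Lemma enabled_theta_pb (x : TP N) : enabled NT M' (inr x) -> M' (pb x) = 1 /\ M' (pa x) = 0.
Proof. by move/(enabled_pre_le (pb x)); rewrite thetaPreE eqxx; have := pa_pb x; lia. Qed.

Lemma enabled_theta_pa (x : TP N) : enabled NT M' (inl (tgt x)) -> M' (pa x) = 1 /\ M' (pb x) = 0.
Proof. by move/(enabled_pre_le (pa x)); rewrite thetaPreE eqxx; have := pa_pb x; lia. Qed.

Lemma fire_theta_new_pa (x y : TP N) : enabled NT M' (inr x) ->
  fire NT M' (inr x) (pa y) = if y == x then 1 else M' (pa y).
Proof.
move=> /enabled_theta_pb[_ pax]; rewrite fireE thetaPreE thetaPostE eq_sym.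
by case: eqP => [->|_]; rewrite ?pax subn0 ?addn0.
Qed.

Lemma fire_theta_new_pb (x y : TP N) : enabled NT M' (inr x) ->
  fire NT M' (inr x) (pb y) = if y == x then 0 else M' (pb y).
Proof.
move=> /enabled_theta_pb[pbx _]; rewrite fireE thetaPreE thetaPostE.
by case: eqP => [->|_]; rewrite ?pbx ?subn0 addn0.
Qed.

Lemma theta_rel_fire_new (x : TP N) : enabled NT M' (inr x) -> theta_rel MN (fire NT M' (inr x)).
Proof.
move=> en; have [pbx pax] := enabled_theta_pb en; case: relM => _ unp pairs.
split=> [y|p unp_p|y].
- by rewrite fire_theta_new_pa ?fire_theta_new_pb //; case: eqP => // _; apply: pa_pb.
- by rewrite fireE thetaPreE thetaPostE (negbTE (unp_p x)) subn0 addn0; apply: unp.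
rewrite fire_theta_new_pa // fireE thetaPreE thetaPostE (inj_eq src_inj) eq_sym.
have [->|_] := eqVneq y x; last by rewrite subn0 addn0; apply: pairs.
by move: (enabled_pre_le (inl (src x)) en); rewrite thetaPreE !eqxx pairs pax; lia.
Qed.

Lemma enabled_N_of_theta t : enabled NT M' (inl t) -> enabled N MN t.
Proof.
case: relM => _ unp pairs en; apply/forallP => p.
case: (placeP p) => [x <-|unp_p]; last first.
  by have := enabled_pre_le (inl p) en; rewrite thetaPreE thetaPair_unpaired // -unp.
have [t_x|t_x] := eqVneq t (tgt x); last by rewrite pre_src_eq0.
move: en; rewrite t_x => /enabled_theta_pa[pa1 _].
by rewrite pairs pa1 mul1n leq_addl.
Qed.

Lemma theta_rel_fire_old t : enabled NT M' (inl t) -> theta_rel (fire N MN t) (fire NT M' (inl t)).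
Proof.
move=> en; have enN := enabled_N_of_theta en; case: relM => _ unp pairs.
split=> [y|p unp_p|y]; rewrite !fireE !thetaPreE !thetaPostE.
- case: eqVneq => [t_y|_]; last by rewrite !subn0 !addn0 pa_pb.
  by move: en; rewrite -t_y => /enabled_theta_pa[-> ->].
- by rewrite thetaPair_unpaired // unp.
rewrite thetaPair_src eq_sym; have [t_y|t_y] := eqVneq t (tgt y).
  by move: en; rewrite t_y => /enabled_theta_pa[pa1 _]; rewrite pairs pa1; lia.
by rewrite pre_src_eq0 // pairs; lia.
Qed.

Lemma enabled_theta_new (x : TP N) : M' (pb x) = 1 -> pre N (src x) (tgt x) <= MN (src x) ->
  enabled NT M' (inr x).
Proof.
case: relM => _ _ pairs pbx pre_le.
have pax := pa_eq0 pbx.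
apply/forallP => -[p|[y []]]; rewrite thetaPreE //.
  by case: eqP => // <-; move: pre_le; rewrite pairs pax addn0.
by case: eqP => // ->; rewrite pbx.
Qed.

Lemma enabled_theta_of_N t : enabled N MN t ->
  (forall x : TP N, tgt x = t -> M' (pa x) = 1) -> enabled NT M' (inl t).
Proof.
case: relM => _ unp _ enN pa1; apply/forallP => -[p|[y []]]; rewrite thetaPreE //.
- case: (placeP p) => [x <-|unp_p]; last by rewrite thetaPair_unpaired // -unp ?enabled_pre_le.
  by rewrite thetaPair_src; case: eqVneq => // /pre_src_eq0 ->.
by case: eqP => // /pa1 ->.
Qed.

End Step.

Lemma fire_theta_new_seq MN M' (l : seq (TP N)) : theta_rel MN M' -> uniq l ->
  (forall x, x \in l -> M' (pb x) = 1 /\ pre N (src x) (tgt x) <= MN (src x)) ->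
  [/\ feasible NT M' (map inr l), theta_rel MN (after NT M' (map inr l)),
      forall y, after NT M' (map inr l) (pa y) = if y \in l then 1 else M' (pa y) &
      forall y, after NT M' (map inr l) (pb y) = if y \in l then 0 else M' (pb y)].
Proof.
elim: l M' => [|x l IH] M' relM //= /andP[x_l uniq_l] ready.
have [pbx pre_x] := ready x (mem_head x l).
have en := enabled_theta_new relM pbx pre_x.
have ready' y : y \in l -> fire NT M' (inr x) (pb y) = 1 /\ pre N (src y) (tgt y) <= MN (src y).
  move=> y_l; rewrite (fire_theta_new_pb relM) //.
  case: eqP => [y_x|_]; first by move: x_l; rewrite -y_x y_l.
  by apply: ready; rewrite inE y_l orbT.
have [feas rel val_pa val_pb] := IH _ (theta_rel_fire_new relM en) uniq_l ready'.
split=> // [|y|y]; first by rewrite en.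
  rewrite val_pa (fire_theta_new_pa relM) // in_cons.
  by case: eqVneq => [->|]; rewrite ?(negbTE x_l).
rewrite val_pb (fire_theta_new_pb relM) // in_cons.
by case: eqVneq => [->|]; rewrite ?(negbTE x_l).
Qed.

Lemma fire_theta_step MN M' t (l : seq (TP N)) : theta_rel MN M' -> enabled N MN t -> uniq l ->
  (forall x, (x \in l) = (tgt x == t) && (M' (pb x) == 1)) ->
  [/\ feasible NT M' (rcons (map inr l) (inl t)),
      theta_rel (fire N MN t) (after NT M' (rcons (map inr l) (inl t))),
      forall y, after NT M' (rcons (map inr l) (inl t)) (pa y) =
        if tgt y == t then 0 else M' (pa y) &
      forall y, after NT M' (rcons (map inr l) (inl t)) (pb y) =
        if tgt y == t then 1 else M' (pb y)].
Proof.
move=> relM enN uniq_l mem_l.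
have ready x : x \in l -> M' (pb x) = 1 /\ pre N (src x) (tgt x) <= MN (src x).
  by rewrite mem_l => /andP[/eqP x_t /eqP pbx]; split; rewrite ?enabled_pre_le ?x_t.
have [feas rel val_pa val_pb] := fire_theta_new_seq relM uniq_l ready.
have pa1 (x : TP N) : tgt x = t -> after NT M' (map inr l) (pa x) = 1.
  move=> x_t; rewrite val_pa mem_l x_t eqxx andTb.
  by case: eqVneq => // pbx; apply/eqP; rewrite (pa_eq1 relM).
have en := enabled_theta_of_N rel enN pa1.
rewrite -cats1 feasible_cat after_cat feas feasible1 en after1; split=> // [|y|y].
- exact: theta_rel_fire_old.
- rewrite fireE thetaPreE thetaPostE; have [/pa1->|y_t] := eqVneq (tgt y) t; first by [].
  by rewrite val_pa mem_l (negbTE y_t) subn0 addn0.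
rewrite fireE thetaPreE thetaPostE; have [y_t|y_t] := eqVneq (tgt y) t.
  by rewrite (pb_eq0 rel) ?pa1.
by rewrite val_pb mem_l (negbTE y_t) subn0 addn0.
Qed.

Lemma newTransPre_theta t : newTransPre N t = [set x | tgt x == t].
Proof.
apply/setP => x; rewrite !inE -[@thetaPost _ _ N]/(post NT) -[@thetaPre _ _ N]/(pre NT).
apply/existsP/idP => [[[p|[y []]]]|/eqP x_t]; rewrite ?thetaPostE ?thetaPreE //.
  by rewrite !lt0b => /andP[/eqP-> ->].
by exists (pa x); rewrite thetaPostE thetaPreE x_t !eqxx.
Qed.

Lemma expand_theta_rel (ordr : {set TP N} -> seq (TP N)) alpha MN M' :
  (forall A, perm_eq (ordr A) (enum A)) -> theta_rel MN M' -> settled M' -> feasible N MN alpha ->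
  [/\ feasible NT M' (expand N ordr alpha),
      theta_rel (after N MN alpha) (after NT M' (expand N ordr alpha))
    & settled (after NT M' (expand N ordr alpha))].
Proof.
move=> ordr_perm; elim: alpha MN M' => [|t alpha IH] MN M' relM setM //= /andP[enN feas].
set l := ordr (newTransPre N t).
have uniq_l : uniq l by rewrite (perm_uniq (ordr_perm _)) enum_uniq.
have mem_l x : (x \in l) = (tgt x == t) && (M' (pb x) == 1).
  by rewrite (perm_mem (ordr_perm _)) mem_enum newTransPre_theta inE (settled_pb relM) ?eqxx ?andbT.
have [feas1 rel1 val_pa _] := fire_theta_step relM enN uniq_l mem_l.
have set1 : settled (after NT M' (rcons (map inr l) (inl t))).
  by move=> y; rewrite val_pa setM; case: ifP.
by rewrite -cat_rcons feasible_cat after_cat feas1; apply: IH.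
Qed.

Definition erase (s : seq (TTh N)) : seq T := pmap (fun u => if u is inl t then Some t else None) s.

Lemma erase_theta_rel s MN M' : theta_rel MN M' -> feasible NT M' s ->
  feasible N MN (erase s) /\ theta_rel (after N MN (erase s)) (after NT M' s).
Proof.
elim: s MN M' => [|[t|x] s IH] MN M' relM //= /andP[en feas].
  by rewrite (enabled_N_of_theta relM en); apply: IH (theta_rel_fire_old relM en) feas.
exact: IH (theta_rel_fire_new relM en) feas.
Qed.

Lemma replay_theta sigma MN M' : theta_rel MN M' -> feasible N MN sigma ->
  exists s, [/\ feasible NT M' s, theta_rel (after N MN sigma) (after NT M' s) &
    forall y, M' (pb y) = 1 -> after NT M' s (pb y) = 1].
Proof.
elim: sigma MN M' => [|t sigma IH] MN M' relM /=; first by exists [::].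
case/andP=> enN feas.
pose l := enum [set x : TP N | (tgt x == t) && (M' (pb x) == 1)].
have mem_l x : (x \in l) = (tgt x == t) && (M' (pb x) == 1) by rewrite mem_enum inE.
have [feas1 rel1 _ val_pb] := fire_theta_step relM enN (enum_uniq _) mem_l.
have [s [feas2 rel2 keep_pb]] := IH _ _ rel1 feas.
exists (rcons (map inr l) (inl t) ++ s); rewrite feasible_cat after_cat feas1.
by split=> // y pby; apply: keep_pb; rewrite val_pb pby; case: ifP.
Qed.

Lemma reduce_cons_inl t s : reduce N (inl t :: s) = inl t :: reduce N s.
Proof. by []. Qed.

Lemma reduce_cons_inr x s :
  reduce N (inr x :: s) = if inl (tgt x) \in s then inr x :: reduce N s else reduce N s.
Proof. by []. Qed.

Lemma reduce_subseq s : subseq (reduce N s) s.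
Proof.
elim: s => [|u s IH] //; rewrite [reduce N _]/= -[u :: s]cat1s.
case: u => [t|x]; last case: ifP => _; rewrite ?(subseq_trans IH) ?suffix_subseq //.
all: by rewrite -cat1s subseq_cat2l.
Qed.

Lemma feasible_reduce M s : feasible NT M s -> feasible NT M (reduce N s).
Proof.
elim: s M => [|[t|x] s IH] M //= /andP[en feas]; first by rewrite en IH.
case: ifP => tgt_s /=; first by rewrite en IH.
apply: (feasible_le (q0 := pa x)) (IH _ feas).
  case=> [t /(mem_subseq (reduce_subseq s)) t_s|y _]; rewrite thetaPreE //.
  by case: eqP => // x_t; rewrite /targetT x_t t_s in tgt_s.
case=> [p|[y []]] q_x; rewrite fireE thetaPreE thetaPostE ?addn0 ?leq_subr //.
have [x_y|_] := eqVneq x y; first by rewrite x_y eqxx in q_x.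
by rewrite subn0 addn0.
Qed.

(* Every firing of t consumes the token of p_a, put there initially or by the last preceding
   t_p; the latter occurrences of t_p are exactly those kept by [reduce]. *)
Lemma count_reduce_new (x : TP N) s MN M' : theta_rel MN M' -> feasible NT M' s ->
  count_mem (inr x) (reduce N s) + M' (pa x) * (inl (tgt x) \in s) = count_mem (inl (tgt x)) s.
Proof.
elim: s MN M' => [|[t|y] s IH] MN M' relM; first by rewrite muln0.
  case/andP=> en /(IH _ _ (theta_rel_fire_old relM en)).
  rewrite fireE thetaPreE thetaPostE addn0 reduce_cons_inl !count_mem_cons in_cons !eq_sumE add0n.
  have [t_x|_] := eqVneq (tgt x) t; last by rewrite subn0 orFb add0n.
  by move: en; rewrite -t_x => /(enabled_theta_pa relM)[-> _]; rewrite subnn mul0n => <-; lia.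
case/andP=> en /(IH _ _ (theta_rel_fire_new relM en)).
rewrite (fire_theta_new_pa relM) // reduce_cons_inr !count_mem_cons in_cons !eq_sumE add0n.
have [<-|y_x] := eqVneq y x.
  have [_ ->] := enabled_theta_pb relM en; rewrite orFb mul0n addn0 mul1n => <-.
  by case: ifP => _; rewrite ?count_mem_cons ?eq_sumE ?eqxx ?addn0 // addnC.
by rewrite orFb => <-; case: ifP => _; rewrite ?count_mem_cons ?eq_inr ?(negbTE y_x).
Qed.

Lemma count_reduce_old t s : count_mem (inl t) (reduce N s) = count_mem (inl t) s.
Proof.
elim: s => [|[t'|y] s IH] //; rewrite ?reduce_cons_inl ?reduce_cons_inr !count_mem_cons ?IH //.
by case: ifP; rewrite ?count_mem_cons eq_inr_inl IH.
Qed.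

Lemma count_erase t s : count_mem t (erase s) = count_mem (inl t) s.
Proof. by elim: s => [|[t'|y] s IH] //=; rewrite IH. Qed.

Lemma count_expand_old (ordr : {set TP N} -> seq (TP N)) alpha t :
  count_mem (inl t) (expand N ordr alpha) = count_mem t alpha.
Proof.
elim: alpha => [|t' alpha IH] //; rewrite [expand _ _ _]/= count_cat count_mem_cons IH eq_inl.
have /count_memPn-> : inl t \notin map inr (ordr (newTransPre N t')) by apply/mapP => -[].
by rewrite count_mem_cons.
Qed.

Lemma count_expand_new (ordr : {set TP N} -> seq (TP N)) alpha (x : TP N) :
  (forall A, perm_eq (ordr A) (enum A)) ->
  count_mem (inr x) (expand N ordr alpha) = count_mem (tgt x) alpha.
Proof.
move=> ordr_perm; elim: alpha => [|t alpha IH] //.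
rewrite [expand _ _ _]/= count_cat count_mem_cons IH eq_inl_inr add0n.
rewrite count_uniq_mem ?(map_inj_uniq inr_inj) ?(perm_uniq (ordr_perm _)) ?enum_uniq //.
rewrite (mem_map inr_inj) (perm_mem (ordr_perm _)) mem_enum newTransPre_theta inE.
by rewrite count_mem_cons eq_sym.
Qed.

Lemma dead_theta MN M' : theta_rel MN M' -> dead NT M' -> dead N MN.
Proof.
move=> relM /forallP deadM; apply/forallP => t; apply/negP => enN.
have [x /andP[/eqP x_t /eqP pbx]|none] := pickP (fun x : TP N => (tgt x == t) && (M' (pb x) == 1)).
  by have := deadM (inr x); rewrite (enabled_theta_new relM pbx) // x_t enabled_pre_le.
have := deadM (inl t); rewrite (enabled_theta_of_N relM enN) // => x x_t.
by apply/eqP; rewrite (pa_eq1 relM); have /negbT := none x; rewrite x_t eqxx.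
Qed.

Lemma theta_reach_dead MN M' : theta_rel MN M' -> settled M' -> dead N MN ->
  exists s, feasible NT M' s && dead NT (after NT M' s).
Proof.
move=> relM setM /forallP deadN.
pose l := enum [set x : TP N | pre N (src x) (tgt x) <= MN (src x)].
have ready x : x \in l -> M' (pb x) = 1 /\ pre N (src x) (tgt x) <= MN (src x).
  by rewrite mem_enum inE (settled_pb relM).
have [feas rel val_pa val_pb] := fire_theta_new_seq relM (enum_uniq _) ready.
exists (map inr l); rewrite feas; apply/forallP => -[t|x]; apply/negP => en.
  by have := deadN t; rewrite (enabled_N_of_theta rel en).
have [pbx _] := enabled_theta_pb rel en; move: pbx; rewrite val_pb.
case: ifP => // x_l _; have := enabled_pre_le (inl (src x)) en.
case: rel => _ _ pairs; rewrite thetaPreE eqxx.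
have := pairs x; rewrite val_pa x_l setM mul0n addn0 => <- pre_le.
by move: x_l; rewrite mem_enum inE pre_le.
Qed.

Lemma live_theta_enable M0 alpha M' t : live N M0 -> feasible N M0 alpha ->
  theta_rel (after N M0 alpha) M' ->
  exists s beta, [/\ feasible NT M' s, feasible N M0 (alpha ++ beta),
    theta_rel (after N M0 (alpha ++ beta)) (after NT M' s),
    enabled N (after N M0 (alpha ++ beta)) t &
    forall y, M' (pb y) = 1 -> after NT M' s (pb y) = 1].
Proof.
move=> liveN feas relM; have [beta /andP[feas_beta en]] := liveN t alpha feas.
have [s [feas_s rel keep_pb]] := replay_theta relM feas_beta.
by exists s, beta; rewrite feasible_cat after_cat feas.
Qed.

Lemma live_theta_fire_old M0 alpha M' t : live N M0 -> feasible N M0 alpha ->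
  theta_rel (after N M0 alpha) M' ->
  exists s beta, [/\ feasible NT M' (rcons s (inl t)), feasible N M0 (alpha ++ beta),
    theta_rel (after N M0 (alpha ++ beta)) (after NT M' (rcons s (inl t))) &
    forall y, tgt y = t -> after NT M' (rcons s (inl t)) (pb y) = 1].
Proof.
move=> liveN feas relM.
have [s [beta [feas_s feas_beta rel en _]]] := live_theta_enable t liveN feas relM.
pose l := enum [set x : TP N | (tgt x == t) && (after NT M' s (pb x) == 1)].
have mem_l x : (x \in l) = (tgt x == t) && (after NT M' s (pb x) == 1) by rewrite mem_enum inE.
have [feas1 rel1 _ val_pb] := fire_theta_step rel en (enum_uniq _) mem_l.
exists (s ++ map inr l), (beta ++ [:: t]).
rewrite rcons_cat catA (feasible_cat NT) (after_cat NT) feas_s.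
rewrite (feasible_cat N M0 (alpha ++ beta)) (after_cat N M0 (alpha ++ beta)).
rewrite feasible1 feas_beta en after1.
by split=> // y y_t; rewrite val_pb y_t eqxx.
Qed.

Lemma feasible_expand (ordr : {set TP N} -> seq (TP N)) M0 alpha :
  (forall A, perm_eq (ordr A) (enum A)) -> feasible N M0 alpha ->
  feasible NT (thetaM0 N M0) (expand N ordr alpha).
Proof.
by move=> ordr_perm /(expand_theta_rel ordr_perm (theta_rel_init M0) (settled_init M0))[].
Qed.

Lemma reduce_parikh_expand (ordr : {set TP N} -> seq (TP N)) M0 beta' :
  (forall A, perm_eq (ordr A) (enum A)) -> feasible NT (thetaM0 N M0) beta' ->
  exists alpha : seq T,
    [/\ feasible N M0 alpha, feasible NT (thetaM0 N M0) (expand N ordr alpha)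
      & parikh (expand N ordr alpha) =1 parikh (reduce N beta')].
Proof.
move=> ordr_perm feas; have [feasN _] := erase_theta_rel (theta_rel_init M0) feas.
exists (erase beta'); split; rewrite ?feasible_expand // => -[t|x].
  by rewrite /parikh count_expand_old count_erase count_reduce_old.
rewrite /parikh count_expand_new // count_erase.
by rewrite -(count_reduce_new x (theta_rel_init M0) feas) mul0n addn0.
Qed.

Lemma deadlockable_theta M0 : deadlockable NT (thetaM0 N M0) <-> deadlockable N M0.
Proof.
split=> [[s /andP[feas dead_s]] | [alpha /andP[feas deadN]]].
  have [feasN relN] := erase_theta_rel (theta_rel_init M0) feas.
  by exists (erase s); rewrite feasN; apply: dead_theta relN dead_s.
have [feasE relE setE] := expand_theta_rel (ordr := fun A => enum A) (fun A => perm_refl _)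
  (theta_rel_init M0) (settled_init M0) feas.
have [s /andP[feas_s dead_s]] := theta_reach_dead relE setE deadN.
by exists (expand N (fun A => enum A) alpha ++ s); rewrite feasible_cat after_cat feasE feas_s.
Qed.

Lemma live_theta M0 : live NT (thetaM0 N M0) <-> live N M0.
Proof.
split=> [liveT t alpha feas | liveN [t|x] beta feas].
- have [feasE relE _] := expand_theta_rel (ordr := fun A => enum A) (fun A => perm_refl _)
    (theta_rel_init M0) (settled_init M0) feas.
  have [s /andP[feas_s en]] := liveT (inl t) _ feasE.
  have [feasN relN] := erase_theta_rel relE feas_s.
  by exists (erase s); rewrite feasN (enabled_N_of_theta relN en).
- have [feasA relA] := erase_theta_rel (theta_rel_init M0) feas.
  have [s [_ [feas_s _ _ _]]] := live_theta_fire_old t liveN feasA relA.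
  by exists s; move: feas_s; rewrite -cats1 feasible_cat feasible1.
have [feasA relA] := erase_theta_rel (theta_rel_init M0) feas.
have [s1 [beta1 [feas1 feasB1 rel1 pb1]]] := live_theta_fire_old (tgt x) liveN feasA relA.
have [s2 [beta2 [feas2 _ rel2 en keep_pb]]] := live_theta_enable (tgt x) liveN feasB1 rel1.
exists (rcons s1 (inl (tgt x)) ++ s2); rewrite feasible_cat feas1 feas2 after_cat !andTb.
by apply: (enabled_theta_new rel2); [apply/keep_pb/pb1 | apply: enabled_pre_le].
Qed.

(** * Structural bounds *)

Section StructuralBound.
Local Open Scope ring_scope.
Variable Y : TTh N -> nat.
Local Notation YN := (fun t => Y (inl t)).

Lemma state_change_theta q : state_change NT Y q =
  \sum_(t : T) inc NT q (inl t) * (Y (inl t))%:Z +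
  \sum_(x : TP N) inc NT q (inr x) * (Y (inr x))%:Z.
Proof. by rewrite /state_change big_sumType. Qed.

Lemma state_change_pa (x : TP N) :
  state_change NT Y (pa x) = (Y (inr x))%:Z - (Y (inl (tgt x)))%:Z.
Proof.
rewrite state_change_theta addrC; congr (_ + _).
  rewrite -(sum_eq_if x (fun y => (Y (inr y))%:Z)); apply: eq_bigr => y _.
  by rewrite /inc thetaPostE thetaPreE eq_sym; case: eqP; rewrite ?mul1r ?mul0r.
rewrite -(sum_eq_if (tgt x) (fun t => - (Y (inl t))%:Z)); apply: eq_bigr => t _.
by rewrite /inc thetaPostE thetaPreE eq_sym; case: eqP; rewrite ?mul0r ?sub0r ?mulNr ?mul1r.
Qed.

Lemma state_change_pb (x : TP N) :
  state_change NT Y (pb x) = (Y (inl (tgt x)))%:Z - (Y (inr x))%:Z.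
Proof.
rewrite state_change_theta; congr (_ + _).
  rewrite -(sum_eq_if (tgt x) (fun t => (Y (inl t))%:Z)); apply: eq_bigr => t _.
  by rewrite /inc thetaPostE thetaPreE eq_sym; case: eqP; rewrite ?mul1r ?mul0r ?subr0.
rewrite -(sum_eq_if x (fun y => - (Y (inr y))%:Z)); apply: eq_bigr => y _.
rewrite /inc thetaPostE thetaPreE eq_sym.
by case: eqVneq; rewrite ?sub0r ?mulNr ?mul1r ?mul0r ?oppr0.
Qed.

Lemma state_change_unpaired p :
  (forall x : TP N, src x != p) -> state_change NT Y (inl p) = state_change N YN p.
Proof.
move=> unp; rewrite state_change_theta [X in _ + X]big1 ?addr0 => [|x _].
  by apply: eq_bigr => t _; rewrite /inc thetaPostE thetaPreE thetaPair_unpaired.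
by rewrite /inc thetaPostE thetaPreE (negbTE (unp x)) subr0 mul0r.
Qed.

Lemma state_change_src (x : TP N) : state_change NT Y (inl (src x)) =
  state_change N YN (src x) + (pre N (src x) (tgt x))%:Z * ((Y (inl (tgt x)))%:Z - (Y (inr x))%:Z).
Proof.
rewrite state_change_theta mulrBr addrA; congr (_ + _); last first.
  rewrite -(sum_eq_if x (fun y => - ((pre N (src x) (tgt x))%:Z * (Y (inr y))%:Z))).
  apply: eq_bigr => y _; rewrite /inc thetaPostE thetaPreE (inj_eq src_inj).
  by case: eqP => [->|_]; rewrite ?sub0r ?mulNr ?subrr ?mul0r.
rewrite /state_change -(sum_eq_if (tgt x) (fun t => (pre N (src x) (tgt x))%:Z * (Y (inl t))%:Z)).
rewrite -big_split /=; apply: eq_bigr => t _; rewrite /inc thetaPostE thetaPreE thetaPair_src.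
case: eqVneq => [->|t_x]; first by rewrite subr0 mulrBl addrNK.
by rewrite pre_src_eq0 // subr0 addr0.
Qed.

End StructuralBound.

Lemma sbounded_theta M0 : (forall p, sbounded N M0 p) -> forall q, sbounded NT (thetaM0 N M0) q.
Proof.
move=> boundN [p|[x b]]; last first.
  exists 1%N => Y nonneg; have := nonneg (pa x); have := nonneg (pb x).
  by case: b; rewrite -/(state_change NT Y (pa x)) -/(state_change NT Y (pb x))
    !state_change_pa !state_change_pb /=; lia.
have [b bound_p] := boundN p; exists b => Y nonneg.
have nonnegN q : (0 <= (M0 q)%:Z + state_change N (fun t => Y (inl t)) q)%R.
  have := nonneg (inl q); rewrite -/(state_change NT Y (inl q)) /=.
  case: (placeP q) => [x <-|unp]; last by rewrite state_change_unpaired.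
  have := nonneg (pa x); rewrite -/(state_change NT Y (pa x)) state_change_pa state_change_src /=.
  nia.
have := bound_p _ nonnegN; rewrite -/(state_change NT Y (inl p)) -/(state_change N _ p) /=.
case: (placeP p) => [x <-|unp]; last by rewrite state_change_unpaired.
have := nonneg (pa x); rewrite -/(state_change NT Y (pa x)) state_change_pa state_change_src /=.
nia.
Qed.


End Theta.

Unset Implicit Arguments.

Theorem mainTheorem8 (P T : finType) (N : pnet P T) (M0 : P -> nat)
  (ordr : {set TP N} -> seq (TP N)) (Hordr : forall A, perm_eq (ordr A) (enum A)) :
  (* (1) *)
  ((is1S N -> is1S (thetaNet N)) /\
   (homogeneous N -> homogeneous (thetaNet N)) /\
   (h1s_wmg N -> h1s_wmg (thetaNet N)) /\
   ([/\ h1s_wmg N, strongly_connected N & del_strongly_connected N] ->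
    [/\ h1s_wmg (thetaNet N), strongly_connected (thetaNet N)
      & del_strongly_connected (thetaNet N)])) /\
  (* (2) *)
  (forall alpha : seq T, feasible N M0 alpha ->
     feasible (thetaNet N) (thetaM0 N M0) (expand N ordr alpha)) /\
  (* (3) *)
  (forall beta' : seq (TTh N), feasible (thetaNet N) (thetaM0 N M0) beta' ->
     feasible (thetaNet N) (thetaM0 N M0) (reduce N beta') /\
     exists alpha : seq T,
       [/\ feasible N M0 alpha,
           feasible (thetaNet N) (thetaM0 N M0) (expand N ordr alpha)
         & parikh (expand N ordr alpha) =1 parikh (reduce N beta')]) /\
  (* (4) *)
  ((forall p : P, sbounded N M0 p) ->
     forall q : PTh N, sbounded (thetaNet N) (thetaM0 N M0) q) /\
  (* (5) *)
  (deadlockable (thetaNet N) (thetaM0 N M0) <-> deadlockable N M0) /\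
  (* (6) *)
  (live (thetaNet N) (thetaM0 N M0) <-> live N M0).
Proof.
split.
  split; first exact: is1S_theta.
  split; first exact: homogeneous_theta.
  split; first exact: h1s_wmg_theta.
  case=> h1sN scN dscN; split;
    [exact: h1s_wmg_theta | exact: strongly_connected_theta | exact: del_strongly_connected_theta].
split; first by move=> alpha; apply: feasible_expand.
split; first by move=> beta' feas; split; [exact: feasible_reduce | exact: reduce_parikh_expand].
split; first exact: sbounded_theta.
split; [exact: deadlockable_theta | exact: live_theta].
Qed.
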